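(* Let $X$ be a separable Fréchet space and $T:X\to X$ a recurrent continuous linear operator. Then the following are equivalent: (1) $T$ is quasi-rigid; (2) for every $m\in\mathbb{N}$, the operator $T_m$ on $X^m$ is recurrent.
   Context: For a continuous linear operator $T$ on a Fréchet space $X$: a vector $x$ is recurrent if there is a strictly increasing sequence $(\omega_n)$ of positive integers with $T^{\omega_n}x\to x$; $\mathrm{Rec}(T)$ is the set of recurrent vectors, and $T$ is recurrent if $\mathrm{Rec}(T)$ is dense in $X$. $\mathfrak{C}$ denotes the set of strictly increasing sequences $\omega=(\omega_n)$ of positive integers for which there exists $x\neq 0$ with $T^{\omega_n}x\to x$. For $\omega\in\mathfrak{C}$, $\mathfrak{L}(\omega)=\{x\in X:\lim_n T^{\omega_n}x=x\}$. $T$ is quasi-rigid if there is $\omega\in\mathfrak{C}$ with $\mathfrak{L}(\omega)$ dense in $X$. For $m\in\mathbb{N}$, $T_m=T\oplus\cdots\oplus T$ ($m$ copies) acting coordinatewise on $X^m$. *)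

From HB Require Import structures.
From mathcomp Require Import all_boot all_order all_algebra.
From mathcomp Require Import all_classical all_reals all_analysis.

Set Implicit Arguments.
Unset Strict Implicit.
Unset Printing Implicit Defensive.

Import Order.TTheory GRing.Theory Num.Theory.

Local Open Scope classical_set_scope.
Local Open Scope ring_scope.

(* A topological vector space X (tvsType: a locally convex tvs over the real
   field R) is a Fréchet space if it is Hausdorff, metrizable (0 has a countable
   neighbourhood base) and complete (every Cauchy sequence for the
   translation-invariant uniformity converges).  Local convexity is part of
   tvsType. *)
Definition frechet (R : realType) (X : tvsType R) : Prop :=
  [/\ hausdorff_space X,
      (exists B : nat -> set X, (forall n, nbhs (0 : X) (B n)) /\
         (forall U, nbhs (0 : X) U -> exists n, B n `<=` U)) &
      (forall u : nat -> X,
         (forall U, nbhs (0 : X) U ->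
            exists N, forall m n, (N <= m)%N -> (N <= n)%N -> U (u m - u n)) ->
         exists l : X, u @ \oo --> l)].

Definition separable_space (X : topologicalType) : Prop :=
  exists D : set X, countable D /\ dense D.

Definition incr_pos_seq (w : nat -> nat) : Prop :=
  (forall n, (0 < w n)%N) /\ (forall n, (w n < w n.+1)%N).

Definition recurrent_vec (Y : topologicalType) (f : Y -> Y) (x : Y) : Prop :=
  exists w : nat -> nat, incr_pos_seq w /\
    (fun n => iter (w n) f x) @ \oo --> x.

Definition Rec (Y : topologicalType) (f : Y -> Y) : set Y :=
  [set x | recurrent_vec f x].

Definition recurrent (Y : topologicalType) (f : Y -> Y) : Prop :=
  dense (Rec f).

Definition frakC (R : realType) (X : tvsType R) (T : X -> X) (w : nat -> nat) : Prop :=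
  incr_pos_seq w /\
  exists x : X, x <> 0 /\ (fun n => iter (w n) T x) @ \oo --> x.

Definition frakL (R : realType) (X : tvsType R) (T : X -> X) (w : nat -> nat) : set X :=
  [set x | (fun n => iter (w n) T x) @ \oo --> x].

Definition quasi_rigid (R : realType) (X : tvsType R) (T : X -> X) : Prop :=
  exists w, frakC T w /\ dense (frakL T w).

(* T_m = T (+) ... (+) T (m copies) acting coordinatewise on X^m, where X^m is
   'I_m -> X with the product topology. *)
Definition Xpow (X : topologicalType) (m : nat) := {ptws 'I_m -> X}.

Definition Tsum (X : topologicalType) (T : X -> X) (m : nat) : Xpow X m -> Xpow X m :=
  fun v i => T (v i).
Arguments Tsum {X} T m.

From HB Require Import structures.
From mathcomp Require Import all_boot all_order all_algebra.
From mathcomp Require Import all_classical all_reals all_analysis.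

Set Implicit Arguments.
Unset Strict Implicit.
Unset Printing Implicit Defensive.

Import Order.TTheory GRing.Theory Num.Theory.

Local Open Scope classical_set_scope.
Local Open Scope ring_scope.

(* (1) => (2): L(w)^m is dense in X^m and consists of points returning along
   w under T_m.

   (2) => (1): fix a base (V_n) of symmetric 0-neighbourhoods with
   V_{n+1} + V_{n+1} <= V_n (metrizability) and a sequence (d_N) visiting
   each point of a countable dense set infinitely often.  At stage N,
   recurrence of T_{N+1} near (y_0, ..., y_{N-1}, d_N) yields a perturbed
   tuple whose iterates up to the previous return time stay V_{N+1}-close to
   the old ones, and a later common return time w_N of the new tuple.  The
   perturbations are summable, so by completeness each y_k converges to some
   z_k; the same telescoping gives T^{w_n} z_k - z_k -> 0.  As z_N stays near
   d_N, the z_k form a dense subset of L(w), which therefore contains a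
   nonzero point because X is Hausdorff. *)

Section TvsNeighbourhoods.
Context (R : numDomainType) (X : tvsType R).

Lemma nbhs0_split (U : set X) : nbhs 0 U ->
  exists2 W : set X, nbhs 0 W &
    (forall a b, W a -> W b -> U (a + b)) /\ (forall a, W a -> W (- a)).
Proof.
move=> U0.
have := @add_continuous X (0, 0); rewrite /continuous_at /= addr0 => /(_ _ U0).
case=> /= -[A B] /= [nA nB] AB.
have nAB : nbhs (0 : X) (A `&` B) by apply: filterI.
exists (A `&` B `&` (-%R @` (A `&` B))); first by apply: filterI => //; exact: nbhs0N.
split.
- by move=> a b [[Aa _] _] [[_ Bb] _]; exact: (AB (a, b)).
- move=> a [ABa [c ABc ca]]; split; last by exists a; rewrite ?opprK.
  by rewrite -ca opprK.
Qed.

Lemma nbhs0_shift (x : X) (O : set X) :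
  nbhs x O -> nbhs 0 [set u | O (x + u)].
Proof.
move=> Ox; have := @nbhsB R X O x (- x) Ox; rewrite addNr.
by apply: filterS => u [z Oz <-] /=; rewrite addrA subrr add0r.
Qed.

Lemma nbhs_shift0 (x : X) (U : set X) :
  nbhs 0 U -> nbhs x [set y | U (y - x)].
Proof.
move=> U0; have := @nbhsT R X U x U0.
by apply: filterS => y [u Uu <-] /=; rewrite addrC addKr.
Qed.

Lemma cvg_nbhs0P (u : nat -> X) (l : X) :
  u @ \oo --> l <-> forall U, nbhs 0 U -> \forall n \near \oo, U (u n - l).
Proof.
split=> [ul U U0|ul O Ol]; first exact: (ul _ (nbhs_shift0 l U0)).
by apply: filterS (ul _ (nbhs0_shift Ol)) => n /=; rewrite addrC subrK.
Qed.

End TvsNeighbourhoods.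

Lemma dense_nbhs (T : topologicalType) (S : set T) (p : T) (O : set T) :
  dense S -> nbhs p O -> exists x, O x /\ S x.
Proof.
move=> dS pO.
have O0 : interior O !=set0 by exists p; exact: nbhs_singleton (nbhs_interior pO).
have [x [Ox Sx]] := dS _ O0 (@open_interior _ O).
by exists x; split => //; exact: interior_subset.
Qed.

Section FinitePowers.
Context (X : topologicalType) (m : nat).

Lemma nbhs_Xpow_box (p : Xpow X m) (A : 'I_m -> set X) :
  (forall i, nbhs (p i) (A i)) -> nbhs p [set f : Xpow X m | forall i, A i (f i)].
Proof.
move=> pA.
apply: (@filter_forall _ _ (fun i => [set f : Xpow X m | A i (f i)]) (nbhs p)) => i.
 exact: (@proj_continuous 'I_m (fun _ => X) i p (A i) (pA i)).
Qed.

Lemma dense_Xpow (L : set X) :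
  dense L -> dense [set f : Xpow X m | forall i, L (f i)].
Proof.
move=> dL O [p Op] oO.
suff /(_ m) [q [Oq Lq]] :
    forall k, exists q, O q /\ forall i : 'I_m, (i < k)%N -> L (q i).
  by exists q; split => // i; exact: Lq.
elim=> [|k [q [Oq Lq]]]; first by exists p.
have [km|mk] := ltnP k m; last first.
  by exists q; split => // i ik; apply: Lq; exact: leq_trans (ltn_ord i) mk.
pose i0 := Ordinal km.
have : nbhs (q i0) (dfwith q i0 @^-1` O).
  apply: (@dfwith_continuous 'I_m (fun _ => X) q i0 (q i0)).
  have -> : dfwith q i0 (q i0) = q.
    by apply: functional_extensionality_dep => j; case: dfwithP.
  by apply: (@open_nbhs_nbhs (Xpow X m)); split.
case/(dense_nbhs dL) => x [Ox Lx].
exists (dfwith q i0 x); split => // i; rewrite ltnS leq_eqVlt => /orP[/eqP ik|ik].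
  by rewrite (_ : i = i0) ?dfwithin //; exact: val_inj.
rewrite dfwithout; first exact: Lq.
by apply/negP => /eqP ei; move: ik; rewrite -ei ltnn.
Qed.

Lemma cvg_Xpow (F : set_system (Xpow X m)) (f : Xpow X m) :
  Filter F -> (forall i, (fun g : Xpow X m => g i) @ F --> f i) -> F --> f.
Proof.
move=> FF Fcoord U [] P [] [] Q QfinP <- [] W QW Wf sub; apply: (filterS sub).
apply: (@filterS _ _ _ (isBaseTopological.b W)); first by move=> g Wg; exists W.
have [L LQ /[dup] WL <-] := QfinP _ QW.
apply: filter_bigI => /= M /[dup] LM /LQ /set_mem [] i _ [N oN NM].
rewrite -NM; apply: (Fcoord i); apply: open_nbhs_nbhs; split => //.
by move: Wf; rewrite -WL => /(_ _ LM); rewrite -NM.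
Qed.

Lemma iter_Tsum (T : X -> X) n (v : Xpow X m) :
  iter n (Tsum T m) v = (fun i => iter n T (v i)).
Proof. by elim: n => //= n ->. Qed.

End FinitePowers.

Lemma recurrent_Tsum_of_quasi_rigid (R : realType) (X : tvsType R) (T : X -> X) :
  quasi_rigid T -> forall m, recurrent (Tsum T m).
Proof.
move=> [w [[w_pos _] dL]] m O O0 oO.
have [f [Of Lf]] := dense_Xpow dL O0 oO.
exists f; split => //; exists w; split => //.
apply: cvg_Xpow => i.
have -> : (fun n => iter (w n) (Tsum T m) f) = (fun n i => iter (w n) T (f i)).
  by apply: funext => n; rewrite iter_Tsum.
exact: Lf.
Qed.

(* A chain of 0-neighbourhoods plays the role of the balls of radius 2^-n of
   an invariant metric. *)
Definition nbhs0_chain (R : numDomainType) (X : tvsType R) (V : nat -> set X) :=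
  [/\ forall n, nbhs 0 (V n),
      forall n a b, V n.+1 a -> V n.+1 b -> V n (a + b)
    & forall n a, V n a -> V n (- a)].

Lemma exists_nbhs0_chain (R : numDomainType) (X : tvsType R) (B : nat -> set X) :
  (forall n, nbhs 0 (B n)) -> exists V, nbhs0_chain V /\ forall n, V n `<=` B n.
Proof.
move=> B0.
have /choice[half halfP] : forall U : set X, exists W : set X, nbhs 0 U ->
    [/\ nbhs 0 W, forall a b, W a -> W b -> U (a + b) & forall a, W a -> W (- a)].
  move=> U; have [U0|] := pselect (nbhs 0 U); last by exists U.
  by have [W W0 [WU WN]] := nbhs0_split U0; exists W.
have half_sub U : nbhs 0 U -> half U `<=` U.
  move=> /halfP[h0 hD _] a ha; rewrite -[a]addr0; apply: hD => //.
  exact: nbhs_singleton.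
pose V := fix V n := half (if n is n'.+1 then V n' `&` B n else B 0).
pose C n := if n is n'.+1 then V n' `&` B n else B 0.
have VE n : V n = half (C n) by case: n.
have C0 n : nbhs 0 (C n).
  elim: n => [|n IH] //=; apply: filterI => //.
  by rewrite VE; have [] := halfP _ IH.
exists V; split; last first.
  case=> [|n] a Va; first exact: half_sub _ (C0 0) a Va.
  by case: (half_sub _ (C0 n.+1) a Va).
split=> [n|n a b|n a].
- by rewrite VE; have [] := halfP _ (C0 n).
- by have [_ hD _] := halfP _ (C0 n.+1) => /hD /[apply] -[].
- by rewrite VE; have [_ _ hN] := halfP _ (C0 n); exact: hN.
Qed.

Section NeighbourhoodChains.
Context (R : numDomainType) (X : tvsType R) (V : nat -> set X).
Hypothesis hV : nbhs0_chain V.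

Lemma chain_nbhs n : nbhs 0 (V n). Proof. by case: hV. Qed.

Lemma chainD n a b : V n.+1 a -> V n.+1 b -> V n (a + b).
Proof. by case: hV => _ hD _; exact: hD. Qed.

Lemma chainN n a : V n a -> V n (- a). Proof. by case: hV => _ _; exact. Qed.

Lemma chainB n a b : V n (a - b) -> V n (b - a).
Proof. by move/chainN; rewrite opprB. Qed.

Lemma chain0 n : V n 0. Proof. exact: nbhs_singleton (chain_nbhs n). Qed.

Lemma chain_decr n k : (n <= k)%N -> V k `<=` V n.
Proof.
move=> /subnK <-; elim: (k - n)%N => [|r IH] a //=.
by rewrite addSn => Va; apply: IH; rewrite -[a]addr0; apply: chainD => //; exact: chain0.
Qed.

Lemma chainD3 n a b c : V n.+2 a -> V n.+2 b -> V n.+1 c -> V n (a + b + c).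
Proof. by move=> Va Vb Vc; apply: chainD => //; exact: chainD. Qed.

(* The analogue of sum_(i >= N) 2^-(i+1) <= 2^-N. *)
Lemma chain_telescope (u : nat -> X) N :
  (forall i, (N <= i)%N -> V i.+1 (u i.+1 - u i)) ->
  forall r, V N (u (N + r)%N - u N).
Proof.
move=> Vu r; elim: r N Vu => [|r IH] N Vu; first by rewrite addn0 subrr; exact: chain0.
have -> : u (N + r.+1)%N - u N = (u N.+1 - u N) + (u (N.+1 + r)%N - u N.+1).
  by rewrite addSnnS [RHS]addrC addrA subrK.
apply: chainD; first exact: Vu.
by apply: IH => i Ni; apply: Vu; exact: ltnW.
Qed.

Lemma chain_lim (u : nat -> X) l c j M0 : u @ \oo --> l ->
  (forall M, (M0 <= M)%N -> V j.+1 (u M - c)) -> V j (l - c).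
Proof.
move=> ul Vu; have [N _ uN] := (cvg_nbhs0P u l).1 ul _ (chain_nbhs j.+1).
have -> : l - c = (l - u (maxn N M0)) + (u (maxn N M0) - c) by rewrite addrA subrK.
apply: chainD; first by apply: chainB; apply: uN; exact: leq_maxl.
by apply: Vu; exact: leq_maxr.
Qed.

Hypothesis V_base : forall U, nbhs 0 U -> exists j, V j `<=` U.

Lemma chain_cauchy (u : nat -> X) N0 :
  (forall r N, (N0 < N)%N -> V N (u (N + r)%N - u N)) ->
  forall U, nbhs 0 U -> exists N, forall m n, (N <= m)%N -> (N <= n)%N -> U (u m - u n).
Proof.
move=> Vu U /V_base[j VjU]; exists (maxn j N0.+1).
have Vmn m n : (maxn j N0.+1 <= n)%N -> (n <= m)%N -> V j (u m - u n).
  rewrite geq_max => /andP[jn N0n] nm.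
  by apply: (chain_decr jn); have := Vu (m - n)%N n N0n; rewrite subnKC.
move=> m n jm jn; apply: VjU.
by have [/(Vmn _ _ jn)|/ltnW/(Vmn _ _ jm)/chainB] := leqP n m.
Qed.

End NeighbourhoodChains.

Section LinearIterates.
Context (R : numDomainType) (X : tvsType R) (T : {linear X -> X}).

Lemma iter_linearB s (a b : X) : iter s T (a - b) = iter s T a - iter s T b.
Proof. by elim: s => //= s ->; rewrite linearB. Qed.

Lemma iter_linear0 s : iter s T (0 : X) = 0.
Proof. by elim: s => //= s ->; rewrite linear0. Qed.

Lemma iter_continuous s : continuous T -> continuous (iter s T).
Proof.
move=> cT; elim: s => [|s IH] x /=; first exact: cvg_id.
exact: (continuous_comp (IH x) (cT _)).
Qed.

Lemma nbhs0_iter_le (U : set X) b : continuous T -> nbhs 0 U ->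
  nbhs (0 : X) [set a | forall s, (s <= b)%N -> U (iter s T a)].
Proof.
move=> cT U0; elim: b => [|b IH].
  by apply: filterS U0 => a Ua s; rewrite leqn0 => /eqP ->.
have : nbhs (0 : X) (iter b.+1 T @^-1` U).
  by have := @iter_continuous b.+1 cT 0; rewrite /continuous_at iter_linear0; exact.
move=> /(filterI IH); apply: filterS => a [Ua Ub] s.
by rewrite leq_eqVlt ltnS => /predU1P[->|]; [exact: Ub | exact: Ua].
Qed.

End LinearIterates.

Lemma logn2_surj_large i j : exists N, (j <= N)%N /\ logn 2 N = i.
Proof.
exists (2 ^ i * (2 * j).+1)%N; split.
  apply: (leq_trans (_ : j <= (2 * j).+1)%N); first by rewrite ltnW // ltnS leq_pmull.
  exact: leq_pmull (expn_gt0 2 i).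
rewrite lognM ?expn_gt0 // pfactorK // logn_coprime ?addn0 //.
by rewrite coprime_sym coprimen2 /= oddM.
Qed.

Lemma countable_sub_range (T : choiceType) (D : set T) (x0 : T) :
  countable D -> exists e : nat -> T, D `<=` range e.
Proof.
move/countable_injP => [f finj].
exists (fun n => xget x0 [set x | D x /\ f x = n]) => d Dd; exists (f d) => //.
case: xgetP => [y -> [Dy fy]|/(_ d) H]; last by exfalso; apply: H.
by apply: finj; rewrite ?inE.
Qed.

Section StageConstruction.
Context (R : realType) (X : tvsType R) (T : {linear X -> X}) (V : nat -> set X).
Hypothesis cT : continuous T.
Hypothesis hV : nbhs0_chain V.
Hypothesis TsumRec : forall m, recurrent (Tsum T m).

Lemma recurrent_Tsum_step N (ys : nat -> X) (b : nat) (d : X) :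
  exists st : (nat -> X) * nat,
   [/\ forall k s, (k < N)%N -> (s <= b)%N ->
         V N.+1 (iter s T (st.1 k) - iter s T (ys k)),
       V N.+1 (st.1 N - d), (b < st.2)%N &
       forall k, (k <= N)%N -> V N.+1 (iter st.2 T (st.1 k) - st.1 k)].
Proof.
set W := [set a | forall s, (s <= b)%N -> V N.+1 (iter s T a)].
have W0 : nbhs 0 W := nbhs0_iter_le b cT (chain_nbhs hV N.+1).
pose p : Xpow X N.+1 := fun i => if (i < N)%N then ys i else d.
have Wp : nbhs p [set f : Xpow X N.+1 | forall i, W (f i - p i)].
  apply: (@nbhs_Xpow_box X N.+1 p (fun i x => W (x - p i))) => i.
  exact: nbhs_shift0.
have [f [Wf [sig [[_ sig_incr] sig_cvg]]]] := dense_nbhs (@TsumRec N.+1) Wp.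
have nf : nbhs f [set g : Xpow X N.+1 | forall i, V N.+1 (g i - f i)].
  apply: (@nbhs_Xpow_box X N.+1 f (fun i x => V N.+1 (x - f i))) => i.
  exact: nbhs_shift0 (chain_nbhs hV _).
have [M _ f_return] := sig_cvg _ nf.
have sig_ge n : (n <= sig n)%N.
  by elim: n => // n IH; exact: leq_ltn_trans IH (sig_incr n).
pose n := maxn M b.+1.
exists (fun k => f (inord k), sig n); split => /=.
- move=> k s kN sb; have := Wf (inord k) s sb.
  by rewrite iter_linearB /p inordK ?kN // ltnS ltnW.
- by have := Wf (inord N) 0 (leq0n _); rewrite /= /p inordK // ltnn.
- exact: leq_trans (leq_maxr M b.+1) (sig_ge n).
- by move=> k kN; have := f_return n (leq_maxl _ _) (inord k); rewrite iter_Tsum.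
Qed.

Variable e : nat -> X.

(* Every natural number is the 2-adic valuation of arbitrarily large N, so
   each e i is targeted at infinitely many stages. *)
Fixpoint stage N : (nat -> X) * nat :=
  if N is N'.+1 then
    projT1 (cid (recurrent_Tsum_step N' (stage N').1 (stage N').2 (e (logn 2 N'))))
  else (fun=> 0, 0%N).

Let stageP N :=
  projT2 (cid (recurrent_Tsum_step N (stage N).1 (stage N).2 (e (logn 2 N)))).

Let y N := (stage N).1.

Definition return_time N := (stage N.+1).2.

Lemma stage_shadow N k s : (k < N)%N -> (s <= (stage N).2)%N ->
  V N.+1 (iter s T (y N.+1 k) - iter s T (y N k)).
Proof. by have [h _ _ _] := stageP N; exact: h. Qed.

Lemma stage_target N : V N.+1 (y N.+1 N - e (logn 2 N)).
Proof. by have [_ h _ _] := stageP N. Qed.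

Lemma stage_time N : ((stage N).2 < return_time N)%N.
Proof. by have [_ _ h _] := stageP N. Qed.

Lemma stage_return N k : (k <= N)%N ->
  V N.+1 (iter (return_time N) T (y N.+1 k) - y N.+1 k).
Proof. by have [_ _ _ h] := stageP N; exact: h. Qed.

Lemma return_time_homo : {homo return_time : n N / (n <= N)%N}.
Proof.
apply: homo_leq => [//|n1 n2 n3|n]; first exact: leq_trans.
exact/ltnW/(stage_time n.+1).
Qed.

Lemma return_time_le_stage n N : (n < N)%N -> (return_time n <= (stage N).2)%N.
Proof. by case: N => // N; rewrite ltnS; exact: return_time_homo. Qed.

Lemma incr_pos_return_time : incr_pos_seq return_time.
Proof.
split=> n; last exact: (stage_time n.+1).
exact: leq_trans (stage_time 0) (return_time_homo (leq0n n)).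
Qed.

Lemma stage_iter_near k s N0 : (k < N0)%N ->
  (forall N, (N0 <= N)%N -> (s <= (stage N).2)%N) ->
  forall r N, (N0 <= N)%N -> V N (iter s T (y (N + r)%N k) - iter s T (y N k)).
Proof.
move=> kN0 s_le r N N0N.
apply: (chain_telescope hV (u := fun M => iter s T (y M k))) => i Ni.
apply: stage_shadow; last exact/s_le/(leq_trans N0N Ni).
exact: leq_trans kN0 (leq_trans N0N Ni).
Qed.

Lemma stage_near k r N : (k < N)%N -> V N (y (N + r)%N k - y N k).
Proof. by move=> kN; exact: (stage_iter_near (s := 0) kN _ r (leqnn N)). Qed.

Hypothesis V_base : forall U, nbhs 0 U -> exists j, V j `<=` U.
Hypothesis complete : forall u : nat -> X,
  (forall U, nbhs 0 U ->
     exists N, forall m n, (N <= m)%N -> (N <= n)%N -> U (u m - u n)) ->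
  exists l : X, u @ \oo --> l.

Lemma stage_cvg k : exists l : X, (fun M => y M k) @ \oo --> l.
Proof.
apply: complete; apply: (chain_cauchy hV V_base (N0 := k)) => r N kN.
exact: stage_near.
Qed.

Definition stage_limit k := projT1 (cid (stage_cvg k)).

Lemma stage_limit_cvg k : (fun M => y M k) @ \oo --> stage_limit k.
Proof. exact: projT2 (cid (stage_cvg k)). Qed.

Lemma iter_stage_limit_cvg s k :
  (fun M => iter s T (y M k)) @ \oo --> iter s T (stage_limit k).
Proof.
apply: (cvg_trans _ (@iter_continuous _ _ T s cT (stage_limit k))).
exact: cvg_app (iter s T) (@stage_limit_cvg k).
Qed.

Lemma stage_limit_near k n : (k <= n)%N -> V n (stage_limit k - y n.+1 k).
Proof.
move=> kn; apply: (chain_lim hV (@stage_limit_cvg k) (M0 := n.+1)) => M nM.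
by have := @stage_near k (M - n.+1) n.+1 kn; rewrite subnKC.
Qed.

Lemma iter_stage_limit_near k n : (k <= n)%N ->
  V n (iter (return_time n) T (stage_limit k) - iter (return_time n) T (y n.+1 k)).
Proof.
move=> kn; apply: (chain_lim hV (@iter_stage_limit_cvg _ k) (M0 := n.+1)) => M nM.
have := @stage_iter_near k (return_time n) n.+1 kn (@return_time_le_stage n)
  (M - n.+1) n.+1 (leqnn _).
by rewrite subnKC.
Qed.

Lemma stage_limit_return j k : (k <= j.+2)%N ->
  V j (iter (return_time j.+2) T (stage_limit k) - stage_limit k).
Proof.
move=> kj.
have -> : iter (return_time j.+2) T (stage_limit k) - stage_limit k =
    (iter (return_time j.+2) T (stage_limit k) - iter (return_time j.+2) T (y j.+3 k))
  + (iter (return_time j.+2) T (y j.+3 k) - y j.+3 k) + (y j.+3 k - stage_limit k).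
  by rewrite !addrA !subrK.
apply: (chainD3 hV) => //; first exact: iter_stage_limit_near.
  by apply: (chain_decr hV (leqnSn _)); exact: stage_return.
by apply: (chain_decr hV (leqnSn _)); apply: (chainB hV); exact: stage_limit_near.
Qed.

Lemma stage_limit_frakL k : frakL T return_time (stage_limit k).
Proof.
apply/cvg_nbhs0P => U /V_base[j VjU].
exists (j + k).+2 => // -[|[|n]] //= ; rewrite !ltnS => jkn.
apply/VjU/(chain_decr hV (leq_trans (leq_addr k j) jkn))/stage_limit_return.
exact: leq_trans (leq_addl j k) (leq_trans jkn (leqW (leqnSn _))).
Qed.

Lemma stage_limit_target N : V N (stage_limit N.+1 - e (logn 2 N.+1)).
Proof.
have -> : stage_limit N.+1 - e (logn 2 N.+1) =
    (stage_limit N.+1 - y N.+2 N.+1) + (y N.+2 N.+1 - e (logn 2 N.+1)).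
  by rewrite addrA subrK.
apply: (chainD hV); first exact: stage_limit_near.
by apply: (chain_decr hV (leqnSn _)); exact: stage_target.
Qed.

Hypothesis e_dense : dense (range e).

Lemma stage_limit_dense (x : X) (O : set X) : nbhs x O -> exists k, O (stage_limit k).
Proof.
move=> /nbhs0_shift /V_base[j VjO].
have [d [Vex [i _ eid]]] := dense_nbhs e_dense (nbhs_shift0 x (chain_nbhs hV j.+1)).
have [[|N] [jN iN]] := logn2_surj_large i j.+2; first by [].
rewrite ltnS in jN; rewrite -eid -iN in Vex.
exists N.+1; have := VjO (stage_limit N.+1 - x); rewrite /= subrKC; apply.
have -> : stage_limit N.+1 - x =
    (stage_limit N.+1 - e (logn 2 N.+1)) + (e (logn 2 N.+1) - x).
  by rewrite addrA subrK.
by apply: (chainD hV) => //; apply: (chain_decr hV jN); exact: stage_limit_target.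
Qed.

Lemma quasi_rigid_of_stage_limits :
  hausdorff_space X -> (exists x : X, x <> 0) -> quasi_rigid T.
Proof.
move=> hX [x0 x00].
have [k0 zk0] : exists k, stage_limit k <> 0.
  apply: contrapT => /forallNP z0; apply: x00; apply: hX => A B xA B0.
  have [k Ak] := stage_limit_dense xA; exists (stage_limit k); split => //.
  by rewrite (contrapT (z0 k)); exact: nbhs_singleton.
exists return_time; split.
  split; first exact: incr_pos_return_time.
  by exists (stage_limit k0); split => //; exact: stage_limit_frakL.
move=> O [x Ox] oO; have [k Ok] := stage_limit_dense (open_nbhs_nbhs (conj oO Ox)).
by exists (stage_limit k); split => //; exact: stage_limit_frakL.
Qed.

End StageConstruction.

Lemma quasi_rigid_of_recurrent_Tsum (R : realType) (X : tvsType R)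
    (T : {linear X -> X}) :
  frechet X -> separable_space X -> (exists x : X, x <> 0) -> continuous T ->
  (forall m, recurrent (Tsum T m)) -> quasi_rigid T.
Proof.
move=> [hX [B [B0 B_base]] complete] [D [cD dD]] [x0 x00] cT TsumRec.
have [V [hV VB]] := exists_nbhs0_chain B0.
have V_base U : nbhs 0 U -> exists j, V j `<=` U.
  by move=> /B_base[j BjU]; exists j; exact: subset_trans (VB j) BjU.
have [e De] := countable_sub_range x0 cD.
have e_dense : dense (range e).
  by move=> O O0 oO; have [x [Ox Dx]] := dD O O0 oO; exists x; split => //; exact: De.
exact: (quasi_rigid_of_stage_limits cT hV TsumRec V_base complete e_dense hX
  (ex_intro _ x0 x00)).
Qed.

Theorem theorem3p2 (R : realType) (X : tvsType R) (T : {linear X -> X}) :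
  frechet X -> separable_space X -> (exists x : X, x <> 0) ->
  continuous T -> recurrent T ->
  (quasi_rigid T <-> forall m : nat, recurrent (Tsum T m)).
Proof.
move=> fX sX nz cT _; split; first exact: recurrent_Tsum_of_quasi_rigid.
exact: quasi_rigid_of_recurrent_Tsum.
Qed.
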